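(* For positive integers $n,k$, $F(n,k)=k(n-1)$.
   Context: Graphs are finite, loopless, possibly with multiple edges. $\kappa'(G)$ is the edge connectivity and $\overline{\kappa'}(G)=\max\{\kappa'(H): H \text{ a subgraph of } G\}$. $F(n,k)$ denotes the maximum number of edges of a graph $G$ on $n$ vertices with $\overline{\kappa'}(G)\le k$. *)

From mathcomp Require Import all_boot.
Set Implicit Arguments. Unset Strict Implicit. Unset Printing Implicit Defensive.

(* A finite loopless multigraph on the vertex set 'I_n is given by its list of
   edges E : seq ('I_n * 'I_n); an edge (u,v) joins u and v (orientation is
   irrelevant), repeated entries are parallel edges. *)
Definition multigraph (n : nat) (E : seq ('I_n * 'I_n)) : bool :=
  all (fun e => e.1 != e.2) E.

Definition cut_size n (EH : seq ('I_n * 'I_n)) (S : {set 'I_n}) : nat :=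
  count (fun e => (e.1 \in S) != (e.2 \in S)) EH.

(* edge connectivity of the graph with vertex set V and edge list EH
   (all endpoints assumed in V): minimum number of edges between S and V\S
   over nonempty proper subsets S of V; 0 if |V| <= 1. *)
Definition edge_conn n (V : {set 'I_n}) (EH : seq ('I_n * 'I_n)) : nat :=
  if [exists S : {set 'I_n}, (S != set0) && (S \proper V)] then
    \big[minn/size EH]_(S : {set 'I_n} | (S != set0) && (S \proper V))
       cut_size EH S
  else 0.

(* subgraphs of (I_n, E): a vertex set V and a sub-multiset mask b E of the
   edges whose endpoints all lie in V. *)
Definition kbar n (E : seq ('I_n * 'I_n)) : nat :=
  \max_(V : {set 'I_n})
    \max_(b : (size E).-tuple bool |
            all (fun e => (e.1 \in V) && (e.2 \in V)) (mask b E))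
      edge_conn V (mask b E).

From mathcomp Require Import all_boot.
From mathcomp Require Import zify.

Set Implicit Arguments. Unset Strict Implicit. Unset Printing Implicit Defensive.

(* Upper bound: for every nonempty vertex set V, the edges inside V number at
   most k(|V| - 1).  If |V| >= 2, the subgraph induced on V has a cut S of at
   most kbar <= k edges; the edges inside V are those inside S, those inside
   V \ S and those of the cut, so induction on |V| gives
   k(|S| - 1) + k(|V \ S| - 1) + k = k(|V| - 1).
   Lower bound: the star with k parallel edges to each leaf has k(n - 1) edges,
   and in any subgraph with at least two vertices some leaf is one of them, and
   that leaf alone is a cut of at most k edges. *)

Definition inside (T : finType) (V : {set T}) (e : T * T) : bool :=
  (e.1 \in V) && (e.2 \in V).

Lemma count_inside_setT (T : finType) (E : seq (T * T)) :
  count (inside [set: T]) E = size E.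
Proof. by rewrite -count_predT; apply: eq_count => e; rewrite /inside !inE. Qed.

Lemma count_inside_set1 n (E : seq ('I_n * 'I_n)) x :
  multigraph E -> count (inside [set x]) E = 0.
Proof.
move=> /allP loopless; apply/eqP; rewrite -leqn0 leqNgt -has_count.
apply/hasPn => e /loopless; rewrite /inside !inE.
by apply: contra => /andP[/eqP-> /eqP->].
Qed.

Lemma inside_split (T : finType) (V S : {set T}) (e : T * T) : S \subset V ->
  inside V e = inside S e + inside (V :\: S) e
               + (((e.1 \in S) != (e.2 \in S)) && inside V e) :> nat.
Proof.
move=> /subsetP sSV; rewrite /inside !inE.
case: (boolP (e.1 \in S)) => [/sSV -> | _]; case: (boolP (e.2 \in S)) => [/sSV -> | _];
  by case: (e.1 \in V); case: (e.2 \in V).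
Qed.

Lemma count_inside_split n (V S : {set 'I_n}) (E : seq ('I_n * 'I_n)) :
  S \subset V ->
  count (inside V) E = count (inside S) E + count (inside (V :\: S)) E
                       + cut_size (filter (inside V) E) S.
Proof.
move=> sSV; rewrite /cut_size count_filter.
elim: E => //= e E ->; rewrite (inside_split e sSV).
by move: (nat_of_bool _) (nat_of_bool _) (nat_of_bool _)
          (count _ E) (count _ E) (count _ E) => *; lia.
Qed.

Lemma bigmin_leq (I : finType) (P : pred I) (F : I -> nat) x0 i :
  P i -> \big[minn/x0]_(j | P j) F j <= F i.
Proof.
move=> Pi; rewrite -big_filter.
have : i \in [seq j <- index_enum I | P j] by rewrite mem_filter Pi mem_index_enum.
elim: (filter _ _) => //= j s IHs.
rewrite big_cons inE => /predU1P[-> | /IHs]; first exact: geq_minl.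
exact/leq_trans/geq_minr.
Qed.

Lemma set1_nonempty_proper (T : finType) (V : {set T}) x :
  x \in V -> 1 < #|V| -> ([set x] != set0) && ([set x] \proper V).
Proof.
move=> xV V2; rewrite properEcard sub1set xV cards1 V2 !andbT.
by apply/set0Pn; exists x; rewrite inE.
Qed.

Lemma exists_other_mem (T : finType) (V : {set T}) x :
  1 < #|V| -> exists2 i, i != x & i \in V.
Proof.
rewrite (cardsD1 x V) => V2; have /card_gt0P[i] : 0 < #|V :\ x|.
  by move: V2; case: (x \in V); lia.
by rewrite !inE => /andP[]; exists i.
Qed.

Lemma edge_conn_small n (V : {set 'I_n}) (EH : seq ('I_n * 'I_n)) :
  #|V| <= 1 -> edge_conn V EH = 0.
Proof.
move=> V1; rewrite /edge_conn; case: existsP => // -[S /andP[S0 SV]].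
by have := proper_card SV; rewrite -card_gt0 in S0; lia.
Qed.

Lemma edge_conn_le_cut n (V S : {set 'I_n}) (EH : seq ('I_n * 'I_n)) :
  (S != set0) && (S \proper V) -> edge_conn V EH <= cut_size EH S.
Proof.
move=> cutS; rewrite /edge_conn; case: existsP => [_ | []]; last by exists S.
exact: bigmin_leq.
Qed.

Lemma edge_conn_min_cut n (V : {set 'I_n}) (EH : seq ('I_n * 'I_n)) :
  1 < #|V| ->
  exists2 S : {set 'I_n}, (S != set0) && (S \proper V)
                        & cut_size EH S <= edge_conn V EH.
Proof.
move=> V2; have /card_gt0P[x xV] : 0 < #|V| by lia.
have x_cut := set1_nonempty_proper xV V2.
rewrite /edge_conn; case: existsP => [_ | []]; last by exists [set x].
apply: (big_ind (fun m => exists2 S, _ & cut_size EH S <= m)).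
- by exists [set x]; rewrite // count_size.
- move=> a b [Sa ? Sa_a] [Sb ? Sb_b].
  by case: (leqP a b) => ab; [exists Sa | exists Sb]; rewrite // leq_min; lia.
- by move=> S ?; exists S.
Qed.

Lemma edge_conn_induced_le_kbar n (V : {set 'I_n}) (E : seq ('I_n * 'I_n)) :
  edge_conn V (filter (inside V) E) <= kbar E.
Proof.
pose b := map_tuple (inside V) (in_tuple E).
have bV : all (fun e => (e.1 \in V) && (e.2 \in V)) (mask b E).
  by rewrite -filter_mask filter_all.
rewrite /kbar (filter_mask (inside V)).
exact: leq_trans (leq_bigmax_cond _ bV) (leq_bigmax V).
Qed.

Lemma count_inside_le n k (E : seq ('I_n * 'I_n)) (V : {set 'I_n}) :
  multigraph E -> kbar E <= k -> V != set0 ->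
  count (inside V) E <= k * (#|V| - 1).
Proof.
move=> loopless kbarE; have [m] := ubnP #|V|; elim: m V => // m IHm V Vm V0.
have [V1 | V2] := leqP #|V| 1.
  have /cards1P[x ->] : #|V| == 1 by rewrite eqn_leq V1 card_gt0.
  by rewrite count_inside_set1.
have [S /andP[S0 SV] cutS] := edge_conn_min_cut (filter (inside V) E) V2.
have cutS_k : cut_size (filter (inside V) E) S <= k.
  exact: leq_trans cutS (leq_trans (edge_conn_induced_le_kbar V E) kbarE).
have sSV := proper_sub SV; have ltSV := proper_card SV.
have cardD : #|V :\: S| = #|V| - #|S| by apply: cardsDS.
have S_pos : 0 < #|S| by rewrite card_gt0.
have D0 : V :\: S != set0 by rewrite -card_gt0 cardD; lia.
have IHS := IHm S ltac:(lia) S0.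
have IHD := IHm (V :\: S) ltac:(lia) D0.
rewrite (count_inside_split E sSV); rewrite {}cardD in IHD.
have -> : k * (#|V| - 1) = k * (#|S| - 1) + k * (#|V| - #|S| - 1) + k.
  by rewrite -[k in _ + _ + k]muln1 -!mulnDr; congr (_ * _); lia.
by rewrite !leq_add.
Qed.

Lemma count_flatten_nseq (T : Type) (p : pred T) m (s : seq T) :
  count p (flatten (nseq m s)) = m * count p s.
Proof. by elim: m => //= m IHm; rewrite count_cat IHm mulSn. Qed.

Section Star.

Variables n k : nat.

Definition star : seq ('I_n.+1 * 'I_n.+1) :=
  flatten (nseq k [seq (ord0, i) | i <- enum (predC1 ord0)]).

Lemma multigraph_star : multigraph star.
Proof.
apply/allP => e /flattenP[s /nseqP[-> _] /mapP[i]].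
by rewrite mem_enum => i0 ->; rewrite eq_sym.
Qed.

Lemma size_star : size star = k * n.
Proof.
rewrite /star -count_predT count_flatten_nseq count_predT size_map.
by rewrite -cardE cardC1 card_ord.
Qed.

Lemma cut_size_star_leaf i : i != ord0 -> cut_size star [set i] = k.
Proof.
move=> i0; rewrite /cut_size count_flatten_nseq count_map.
rewrite -[RHS]muln1; congr (_ * _).
rewrite (@eq_count _ _ (pred1 i)); last first.
  by move=> j /=; rewrite !inE [ord0 == _]eq_sym (negbTE i0); case: (j == i).
by rewrite count_uniq_mem ?enum_uniq // mem_enum inE i0.
Qed.

Lemma kbar_star : kbar star <= k.
Proof.
apply/bigmax_leqP => V _; apply/bigmax_leqP => b _.
have [V1 | V2] := leqP #|V| 1; first by rewrite edge_conn_small.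
have [i i0 iV] := exists_other_mem ord0 V2.
apply: leq_trans (edge_conn_le_cut _ (set1_nonempty_proper iV V2)) _.
by rewrite -(cut_size_star_leaf i0); apply: leq_count_mask.
Qed.

End Star.

Theorem corollary3p6 (n k : nat) : 0 < n -> 0 < k ->
  (exists E : seq ('I_n * 'I_n),
      [/\ multigraph E, kbar E <= k & size E = k * (n - 1)]) /\
  (forall E : seq ('I_n * 'I_n),
      multigraph E -> kbar E <= k -> size E <= k * (n - 1)).
Proof.
case: n => [|n] // _ _; split.
  exists (star n k); rewrite subn1.
  split; [exact: multigraph_star | exact: kbar_star | exact: size_star].
move=> E loopless kbarE; rewrite -count_inside_setT.
have setT0 : [set: 'I_n.+1] != set0 by apply/set0Pn; exists ord0.
have := count_inside_le loopless kbarE setT0.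
by rewrite cardsT card_ord.
Qed.
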